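(* If the generating distribution is Markov to a chain graph satisfying tier symmetry and the causal ordering assumption, then the search space of Greedy Network Search consists of graphs that each belong to their own Markov equivalence class of size 1.
   Context: Setting: LWF chain graphs (graphs with directed and undirected edges and no partially directed cycles) over variables for units $i$ in blocks, each unit having baseline covariates $\mathbf{L}_i$, a treatment $A_i$ and an outcome $Y_i$. The within-unit structure is known and fixed; only cross-unit edges (network ties) between units $i \neq j$ are searched over. Causal ordering assumption: for each unit $i$, $\mathbf{L}_i \subseteq \mathrm{pa}(A_i)$ and $\mathbf{L}_i \cup \{A_i\} \subseteq \mathrm{pa}(Y_i)$, and cross-unit edges respect this ordering (e.g. $A_i \rightarrow Y_j$ allowed, $Y_j \rightarrow A_i$ ruled out). Tier symmetry: edges between variables of the same tier across units are undirected ($L_i - L_j$, $A_i - A_j$, $Y_i - Y_j$), and there are no undirected edges connecting different tiers (e.g. no $A_i - Y_j$). Greedy Network Search: starting from the complete (conditional) Markov random field on one tier ($\mathbf{L}$, $\mathbf{A}$ given $\mathbf{L}$, or $\mathbf{Y}$ given $\mathbf{L},\mathbf{A}$), it repeatedly deletes the single network-tie edge whose removal most increases the pseudolikelihood-based BIC score (PBIC $= 2\ln$ pseudolikelihood $- k\ln n$), stopping when no deletion improves the score. Thus the only edges added/removed in the search space are of the form $L_i - L_j$, $A_i - A_j$, $Y_i - Y_j$, $L_i \rightarrow A_j$, $L_i \rightarrow Y_j$, $A_i \rightarrow Y_j$. Two graphs are Markov equivalent if they imply the same conditional independences under the chain graph global Markov property. *)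

From mathcomp Require Import all_boot.
Set Implicit Arguments. Unset Strict Implicit. Unset Printing Implicit Defensive.

(* Vertices: L_{u,c} (unit u, covariate c), A_u, Y_u. *)
Definition vtx (U C : finType) : finType := ((U * C) + U + U)%type.

Definition unit_of (U C : finType) (v : vtx U C) : U :=
  match v with
  | inl (inl (u, _)) => u
  | inl (inr u) => u
  | inr u => u
  end.

(* tier: 0 = L, 1 = A, 2 = Y *)
Definition tier (U C : finType) (v : vtx U C) : nat :=
  match v with
  | inl (inl _) => 0
  | inl (inr _) => 1
  | inr _ => 2
  end.

Record mgraph (V : finType) := MGraph { dir : rel V; und : rel V }.

Definition bd_step (V : finType) (G : mgraph V) : rel V :=
  fun a b => dir G a b || und G a b.

(* Chain graph: loopless, undirected edges symmetric, no partially
   directed (semi-directed) cycle. *)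
Definition is_chain_graph (V : finType) (G : mgraph V) : Prop :=
  [/\ forall x, ~~ und G x x,
      forall x, ~~ dir G x x,
      forall x y, und G x y = und G y x
    & forall x y, dir G x y -> ~~ connect (bd_step G) y x].

Definition in_search_space (U C B : finType) (blk : U -> B)
  (G : mgraph (vtx U C)) : Prop :=
  [/\ is_chain_graph G,
      (* causal ordering within each unit: L_i -> A_i, L_i -> Y_i, A_i -> Y_i *)
      forall x y, unit_of x = unit_of y -> tier x < tier y -> dir G x y,
      forall x y, unit_of x != unit_of y -> dir G x y -> tier x < tier y,
      (* tier symmetry: undirected edges only join variables of the same tier *)
      forall x y, und G x y -> tier x = tier y
    &
      forall x y, unit_of x != unit_of y -> bd_step G x y ->
        blk (unit_of x) = blk (unit_of y)].

Definition same_within (U C : finType) (G H : mgraph (vtx U C)) : Prop :=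
  forall x y, unit_of x = unit_of y ->
    dir G x y = dir H x y /\ und G x y = und H x y.

(* LWF global Markov property. *)
Definition anterior (V : finType) (G : mgraph V) (S : {set V}) : {set V} :=
  [set v | [exists s in S, connect (bd_step G) v s]].

(* moral graph of the induced subgraph G_A: x ~ y iff adjacent in G_A or
   both are parents of a common chain component of G_A. *)
Definition moral (V : finType) (G : mgraph V) (A : {set V}) : rel V :=
  fun x y =>
    [&& x \in A, y \in A, x != y &
      [|| dir G x y, dir G y x, und G x y |
        [exists u, exists w,
          [&& u \in A, w \in A, dir G x u, dir G y w &
              connect (fun a b => [&& und G a b, a \in A & b \in A]) u w]]]].

Definition separated (V : finType) (G : mgraph V) (X Y Z : {set V}) : Prop :=
  let A := anterior G (X :|: Y :|: Z) in
  forall x y, x \in X -> y \in Y ->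
    ~~ connect (fun a b => [&& moral G A a b, a \notin Z & b \notin Z]) x y.

Definition markov_equiv (V : finType) (G H : mgraph V) : Prop :=
  forall X Y Z : {set V},
    [disjoint X & Y] -> [disjoint X & Z] -> [disjoint Y & Z] ->
    (separated G X Y Z <-> separated H X Y Z).

(* Markov equivalent chain graphs have the same skeleton: two non-adjacent vertices x, y are separated
   by their anterior set minus {x, y}, since a moralising "common child" of x and y inside that anterior
   set would close a semi-directed cycle, whereas adjacent vertices are never separated. In the search
   space a cross-unit edge is determined by its endpoints once it is known to exist: it is undirected
   between equal tiers and points from the lower to the higher tier otherwise. *)
From mathcomp Require Import all_boot.
Set Implicit Arguments. Unset Strict Implicit. Unset Printing Implicit Defensive.

Definition adj (V : finType) (G : mgraph V) (x y : V) : bool :=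
  [|| dir G x y, dir G y x | und G x y].

Lemma connect_from_sink (V : finType) (e : rel V) x y :
  (forall z, ~~ e x z) -> connect e x y -> y = x.
Proof.
move=> sink_x /connectP [[|z p] /= xp ->] //.
by move: xp => /andP [xz _]; move: (sink_x z); rewrite xz.
Qed.

Section Separation.

Variables (V : finType) (G : mgraph V).

Lemma sub_anterior (S : {set V}) : S \subset anterior G S.
Proof. by apply/subsetP=> v vS; rewrite inE; apply/existsP; exists v; rewrite vS connect0. Qed.

Lemma anterior_setU_sub (S T : {set V}) :
  T \subset anterior G S -> anterior G (S :|: T) = anterior G S.
Proof.
move=> /subsetP sub_T; apply/setP=> v; rewrite !inE.
apply/existsP/existsP=> -[s /andP [sST vs]]; last by exists s; rewrite inE sST.
case/setUP: sST => [sS | /sub_T]; first by exists s; rewrite sS.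
by rewrite inE => /existsP [t /andP [tS st]]; exists t; rewrite tS (connect_trans vs st).
Qed.

Lemma adj_not_separated x y (Z : {set V}) :
  x != y -> adj G x y -> x \notin Z -> y \notin Z -> ~ separated G [set x] [set y] Z.
Proof.
move=> xy xy_adj xZ yZ sep.
have /negP := sep x y (set11 x) (set11 y); apply; apply: connect1.
have /subsetP in_ant := sub_anterior ([set x] :|: [set y] :|: Z).
rewrite xZ yZ /moral xy !in_ant ?inE ?eqxx ?orbT //=.
by case/or3P: xy_adj => ->; rewrite ?orbT.
Qed.

Hypothesis chainG : is_chain_graph G.

(* A common child complex of x and y in an anterior set of {x, y} lies below x or y, and is entered
   from both x and y by directed edges: either way we get a semi-directed cycle. *)
Lemma moral_anterior_adj x y : moral G (anterior G [set x; y]) x y -> adj G x y.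
Proof.
case: chainG => _ _ und_sym no_cycle.
set A := anterior G [set x; y].
case/and4P=> _ _ _ /or4P [dxy | dyx | uxy | ]; rewrite /adj ?dxy ?dyx ?uxy ?orbT //.
case/existsP=> u /existsP [w /and5P [uA _ xu yw uw]].
have wu : connect (bd_step G) w u.
  have symA : symmetric (fun a b => [&& und G a b, a \in A & b \in A]).
    by move=> a b /=; rewrite und_sym; case: (a \in A); case: (b \in A); rewrite ?andbF.
  rewrite (sym_connect_sym symA) in uw; apply: connect_sub uw => a b /andP [ab _].
  by apply: connect1; rewrite /bd_step ab orbT.
move: uA; rewrite inE => /existsP [s /andP [/set2P [] -> us]].
  by move: (no_cycle _ _ xu); rewrite us.
by move: (no_cycle _ _ yw); rewrite (connect_trans wu us).
Qed.

Lemma nonadj_separated x y :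
  x != y -> ~~ adj G x y ->
  separated G [set x] [set y] (anterior G [set x; y] :\: [set x; y]).
Proof.
move=> xy nadj.
set Z := anterior G [set x; y] :\: [set x; y].
have antZ : anterior G ([set x] :|: [set y] :|: Z) = anterior G [set x; y].
  by apply: anterior_setU_sub; apply: subsetDl.
rewrite /separated antZ /= => a b /set1P -> /set1P ->.
have sink_x z : ~~ [&& moral G (anterior G [set x; y]) x z, x \notin Z & z \notin Z].
  apply/negP=> /and3P [xz _]; move: (xz) => /and4P [_ zA zx _].
  rewrite /Z in_setD zA andbT negbK => /set2P [] z_eq; first by rewrite z_eq eqxx in zx.
  by case/negP: nadj; apply: moral_anterior_adj; rewrite z_eq in xz.
by apply/negP=> /(connect_from_sink sink_x) yx; rewrite yx eqxx in xy.
Qed.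

End Separation.

Lemma markov_equiv_sym (V : finType) (G H : mgraph V) : markov_equiv G H -> markov_equiv H G.
Proof. by move=> GH X Y Z dXY dXZ dYZ; apply: iff_sym; apply: GH. Qed.

Lemma markov_equiv_adj_sub (V : finType) (G H : mgraph V) x y :
  is_chain_graph G -> markov_equiv G H -> x != y -> adj H x y -> adj G x y.
Proof.
move=> chainG GH xy xy_adjH; apply/negPn/negP=> nadjG.
set Z := anterior G [set x; y] :\: [set x; y].
have xZ : x \notin Z by rewrite in_setD set21.
have yZ : y \notin Z by rewrite in_setD set22.
have dXY : [disjoint [set x] & [set y]] by rewrite disjoints1 inE.
have dXZ : [disjoint [set x] & Z] by rewrite disjoints1.
have dYZ : [disjoint [set y] & Z] by rewrite disjoints1.
apply: (adj_not_separated xy xy_adjH xZ yZ).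
exact: (proj1 (GH _ _ _ dXY dXZ dYZ) (nonadj_separated chainG xy nadjG)).
Qed.

Lemma markov_equiv_adj (V : finType) (G H : mgraph V) x y :
  is_chain_graph G -> is_chain_graph H -> markov_equiv G H -> x != y ->
  adj G x y = adj H x y.
Proof.
move=> chainG chainH GH xy; apply/idP/idP.
  exact: markov_equiv_adj_sub (markov_equiv_sym GH) xy.
exact: markov_equiv_adj_sub.
Qed.

Section CrossUnitEdges.

Variables (U C : finType) (K : mgraph (vtx U C)).
Hypothesis dir_tier : forall x y, unit_of x != unit_of y -> dir K x y -> tier x < tier y.
Hypothesis und_tier : forall x y, und K x y -> tier x = tier y.

Variables x y : vtx U C.
Hypothesis xy_units : unit_of x != unit_of y.

Let yx_units : unit_of y != unit_of x. Proof. by rewrite eq_sym. Qed.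

Lemma cross_dir_adj : dir K x y = adj K x y && (tier x < tier y).
Proof.
rewrite /adj; case dxy: (dir K x y); first by rewrite (dir_tier xy_units dxy).
case: ltngtP => [lt_xy | _ | _]; rewrite ?andbF // andbT /=.
have -> : dir K y x = false by apply/negP=> /(dir_tier yx_units); rewrite ltnNge ltnW.
by apply/esym/negP=> /und_tier eq_xy; rewrite eq_xy ltnn in lt_xy.
Qed.

Lemma cross_und_adj : und K x y = adj K x y && (tier x == tier y).
Proof.
rewrite /adj; case uxy: (und K x y); first by rewrite !orbT (und_tier uxy) eqxx.
rewrite orbF; case: eqVneq => [eq_xy | _]; rewrite ?andbF // andbT.
apply/esym/norP; split; apply/negP.
  by move/(dir_tier xy_units); rewrite eq_xy ltnn.
by move/(dir_tier yx_units); rewrite eq_xy ltnn.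
Qed.

End CrossUnitEdges.

Theorem lemma3 (U C B : finType) (blk : U -> B) (G H : mgraph (vtx U C)) :
  in_search_space blk G -> in_search_space blk H ->
  same_within G H -> markov_equiv G H ->
  forall x y, dir G x y = dir H x y /\ und G x y = und H x y.
Proof.
move=> [chainG _ dirG undG _] [chainH _ dirH undH _] within GH x y.
have [same_unit | xy_units] := eqVneq (unit_of x) (unit_of y); first exact: within.
have xy : x != y by apply: contraNneq xy_units => ->.
rewrite (cross_dir_adj dirG undG xy_units) (cross_dir_adj dirH undH xy_units).
rewrite (cross_und_adj dirG undG xy_units) (cross_und_adj dirH undH xy_units).
by rewrite (markov_equiv_adj chainG chainH GH xy).
Qed.
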